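(* Let $D$ be a non-commutative division ring with center $F$. Then either $D$ has a maximal subring or $\dim_F(D)\geq |F|$.
   Context: All rings are associative unital and subrings share the identity. A maximal subring of a ring $T$ is a proper subring maximal under inclusion among proper subrings of $T$. $\dim_F(D)$ is the dimension of $D$ as a vector space over its center $F$. *)

From mathcomp Require Import all_boot all_order all_algebra.
Set Implicit Arguments. Unset Strict Implicit. Unset Printing Implicit Defensive.
Import GRing.Theory.
Local Open Scope ring_scope.

(* A ring D is a division ring if every nonzero element is a unit
   (unitRingType already guarantees 1 != 0). *)
Definition division_ring (D : unitRingType) : Prop :=
  forall x : D, x != 0 -> x \is a GRing.unit.

Definition central (D : unitRingType) (c : D) : Prop :=
  forall x : D, c * x = x * c.

Definition is_subring (D : unitRingType) (S : D -> Prop) : Prop :=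
  [/\ S 1,
      (forall x y, S x -> S y -> S (x - y)) &
      (forall x y, S x -> S y -> S (x * y))].

Definition maximal_subring (D : unitRingType) (S : D -> Prop) : Prop :=
  [/\ is_subring S,
      (exists x, ~ S x) &
      (forall T : D -> Prop, is_subring T -> (forall x, S x -> T x) ->
         (forall x, T x) \/ (forall x, T x <-> S x))].

Definition center_lin_indep (D : unitRingType) (B : D -> Prop) : Prop :=
  forall (n : nat) (b c : 'I_n -> D),
    injective b -> (forall i, B (b i)) -> (forall i, central (c i)) ->
    \sum_(i < n) c i * b i = 0 -> forall i, c i = 0.

Definition center_spanning (D : unitRingType) (B : D -> Prop) : Prop :=
  forall x : D, exists (n : nat) (b c : 'I_n -> D),
    [/\ (forall i, B (b i)), (forall i, central (c i)) &
        x = \sum_(i < n) c i * b i].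

Definition center_basis (D : unitRingType) (B : D -> Prop) : Prop :=
  center_lin_indep B /\ center_spanning B.

(* dim_F(D) >= |F| : some F-basis B of D admits an injection from F into B. *)
Definition dim_center_ge_card_center (D : unitRingType) : Prop :=
  exists (B : D -> Prop) (f : D -> D),
    [/\ center_basis B,
        (forall c, central c -> B (f c)) &
        (forall c1 c2, central c1 -> central c2 -> f c1 = f c2 -> c1 = c2)].

From mathcomp Require Import all_boot all_order all_algebra.
From mathcomp Require Import boolp classical_sets.
Import GRing.Theory.
Set Implicit Arguments. Unset Strict Implicit. Unset Printing Implicit Defensive.
Local Open Scope classical_set_scope.
Local Open Scope ring_scope.

(* Pick x outside the center F. If x is algebraic over F, with minimal
   polynomial p of degree n, then 1, x, ..., x^(n-1) are F-independent, so
   some elementary operator f z = \sum_i a_i z b_i maps x^j to [j == n-1]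
   for j < n. With T_s d = \sum_(i < s) x^i d x^(s-1-i) the map
   q d = \sum_s p_s T_s d lands in the centralizer C(x), and
   d = \sum_i q (d a_i) b_i; so D is generated by the proper subring C(x)
   and the b_i, and Zorn's lemma yields a maximal subring containing C(x).
   If x is transcendental over F, partial fractions show that the elements
   (x - a)^-1, a in F, are F-independent; any F-basis extending them has at
   least |F| elements. *)

Lemma Zorn_nonempty_chains (T : Type) (Q : set (set T)) :
  Q !=set0 ->
  (forall F : set (set T), F !=set0 -> F `<=` Q -> total_on F subset ->
     Q (\bigcup_(X in F) X)) ->
  exists M, Q M /\ forall B, Q B -> M `<=` B -> B `<=` M.
Proof.
move=> [A QA] Qchain.
(* [Zorn_bigcup] also has to handle the empty chain, so it is applied to
   [X |-> Q (X `|` A)] for a fixed [A] satisfying [Q]. *)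
have [F FQ Ftot|M [QMA Mmax]] := @Zorn_bigcup T (fun X => Q (X `|` A)).
  have [[X0 FX0]|F0] := pselect (F !=set0); last first.
    rewrite bigcup0 ?set0U // => X FX; by case: F0; exists X.
  rewrite -bigcupUl; last by exists X0.
  rewrite -(bigcup_image F (setU^~ A) id); apply: Qchain.
  - by exists (X0 `|` A), X0.
  - by move=> _ [X FX <-]; apply: FQ.
  - move=> _ _ [X FX <-] [Y FY <-].
    by have [XY|YX] := Ftot X Y FX FY; [left|right]; apply: setUSS.
exists (M `|` A); split=> // B QB MAB; apply: contrapT => nBMA.
apply: (Mmax B); last by rewrite setUidl // => t At; apply: MAB; right.
split=> [t Mt|BM]; first by apply: MAB; left.
by apply: nBMA => t /BM; left.
Qed.

Lemma chain_bigcup_finite (T : eqType) (F : set (set T)) (s : seq T) :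
  F !=set0 -> total_on F subset ->
  (forall y, y \in s -> (\bigcup_(X in F) X) y) ->
  exists2 X, F X & forall y, y \in s -> X y.
Proof.
move=> [X0 FX0] Ftot; elim: s => [|a s IH] sF; first by exists X0.
have [Xa FXa Xa_a] := sF a (mem_head a s).
have [Xs FXs Xs_s] : exists2 X, F X & forall y, y \in s -> X y.
  by apply: IH => y ys; apply: sF; rewrite inE ys orbT.
have [XaXs|XsXa] := Ftot _ _ FXa FXs.
- by exists Xs => // y; rewrite inE => /predU1P[->|/Xs_s]; [exact: XaXs|].
- by exists Xa => // y; rewrite inE => /predU1P[->|/Xs_s/XsXa].
Qed.

Section CenterAndSubrings.
Variable D : unitRingType.
Implicit Types (a b : D) (S : set D).

Lemma central0 : central (0 : D).
Proof. by move=> z; rewrite mul0r mulr0. Qed.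

Lemma centralD a b : central a -> central b -> central (a + b).
Proof. by move=> Ca Cb z; rewrite mulrDl mulrDr Ca Cb. Qed.

Lemma centralN a : central a -> central (- a).
Proof. by move=> Ca z; rewrite mulNr mulrN Ca. Qed.

Lemma centralM a b : central a -> central b -> central (a * b).
Proof. by move=> Ca Cb z; rewrite -mulrA Cb mulrA Ca mulrA. Qed.

Lemma centralV a : central a -> central a^-1.
Proof.
move=> Ca z; have [aU|/invr_out->] := boolP (a \is a GRing.unit); last exact: Ca.
by apply: (mulrI aU); rewrite mulrA mulrV // mul1r mulrA Ca mulrK.
Qed.

Lemma central_nat n : central (n%:R : D).
Proof. by move=> z; rewrite commr_nat. Qed.

Lemma central_sum (I : eqType) (r : seq I) (F : I -> D) :
  (forall i, i \in r -> central (F i)) -> central (\sum_(i <- r) F i).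
Proof.
move=> CF; rewrite big_seq; apply: big_rec => [|i y ir Cy]; first exact: central0.
by apply: centralD => //; apply: CF.
Qed.

Lemma subring0 S : is_subring S -> S 0.
Proof. by case=> S1 SB _; rewrite -(subrr 1); apply: SB. Qed.

Lemma subringD S a b : is_subring S -> S a -> S b -> S (a + b).
Proof.
move=> SS Sa Sb; have S0 := subring0 SS; case: SS => _ SB _.
by rewrite -[b]opprK -[- b]sub0r; apply/SB/SB.
Qed.

Lemma subring_sum S (I : eqType) (r : seq I) (F : I -> D) :
  is_subring S -> (forall i, i \in r -> S (F i)) -> S (\sum_(i <- r) F i).
Proof.
move=> SS SF; rewrite big_seq; apply: big_rec => [|i y ir Sy]; first exact: subring0.
by apply: subringD => //; apply: SF.
Qed.

Lemma is_subring_bigcup_chain (F : set (set D)) :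
  F !=set0 -> F `<=` @is_subring D -> total_on F subset ->
  is_subring (\bigcup_(X in F) X).
Proof.
move=> F0 FS Ftot.
have common_member a b : (\bigcup_(X in F) X) a -> (\bigcup_(X in F) X) b ->
    exists2 X, F X & X a /\ X b.
  move=> Fa Fb; have [|X FX Xab] := @chain_bigcup_finite _ F [:: a; b] F0 Ftot.
    by move=> y; rewrite !inE => /orP[]/eqP->.
  by exists X => //; split; apply: Xab; rewrite !inE eqxx ?orbT.
have [X0 FX0] := F0; split; first by exists X0 => //; case: (FS X0 FX0).
- move=> a b Fa Fb; have [X FX [Xa Xb]] := common_member a b Fa Fb.
  by exists X => //; case: (FS X FX) => _ SB _; apply: SB.
- move=> a b Fa Fb; have [X FX [Xa Xb]] := common_member a b Fa Fb.
  by exists X => //; case: (FS X FX) => _ _ SM; apply: SM.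
Qed.

Definition ring_generated_over (C : set D) (gs : seq D) :=
  forall T : set D, is_subring T -> C `<=` T -> (forall g, g \in gs -> T g) ->
    forall d, T d.

Lemma exists_maximal_subring_over (C : set D) (gs : seq D) :
  is_subring C -> (exists z, ~ C z) -> ring_generated_over C gs ->
  exists S : set D, maximal_subring S.
Proof.
move=> SC [z nCz] gen.
pose Q T := [/\ is_subring T, C `<=` T & exists z, ~ T z].
have [|F F0 FQ Ftot|M [[SM CM nM] Mmax]] := @Zorn_nonempty_chains D Q.
- by exists C; split => //; exists z.
- have [X0 FX0] := F0; split.
  + by apply: is_subring_bigcup_chain => // X /FQ[].
  + by move=> c Cc; exists X0 => //; case: (FQ X0 FX0) => _ + _; apply.
  + apply: contrapT => full.
    have [|X FX Xgs] := @chain_bigcup_finite _ F gs F0 Ftot.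
      by move=> y _; apply: contrapT => nFy; apply: full; exists y.
    have [SX CX [t nXt]] := FQ X FX; exact: nXt (gen X SX CX Xgs t).
exists M; split=> // T ST MT.
have [Tall|nT] := pselect (forall t, T t); first by left.
right=> t; split; last exact: MT.
by apply: Mmax => //; split=> [//|c /CM /MT //|]; apply/existsNP.
Qed.

End CenterAndSubrings.

Section CenterBases.
Variable D : unitRingType.
Hypothesis hD : division_ring D.

Definition center_free (B : set D) :=
  forall s : seq D, uniq s -> (forall y, y \in s -> B y) ->
  forall c : D -> D, (forall y, y \in s -> central (c y)) ->
  \sum_(y <- s) c y * y = 0 -> forall y, y \in s -> c y = 0.

Definition center_span (B : set D) (d : D) :=
  exists (n : nat) (b c : 'I_n -> D),
    [/\ (forall i, B (b i)), (forall i, central (c i)) & d = \sum_(i < n) c i * b i].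

Lemma center_span_seq (B : set D) (s : seq D) (c : D -> D) :
  (forall y, y \in s -> B y) -> (forall y, y \in s -> central (c y)) ->
  center_span B (\sum_(y <- s) c y * y).
Proof.
move=> sB Cc; exists (size s), (fun i => nth 0 s i), (fun i => c (nth 0 s i)).
split=> [i|i|]; [exact/sB/mem_nth|exact/Cc/mem_nth|].
by rewrite (big_nth 0) big_mkord.
Qed.

Lemma center_free_lin_indep (B : set D) : center_free B -> center_lin_indep B.
Proof.
move=> freeB n b c b_inj Bb Cc sum0 i.
pose c' y := if [pick j | b j == y] is Some j then c j else 0.
have c'b j : c' (b j) = c j.
  by rewrite /c'; case: pickP => [k /eqP/b_inj -> //|/(_ j)]; rewrite eqxx.
have := freeB [seq b j | j <- index_enum 'I_n] _ _ c' _ _ (b i) _; rewrite c'b; apply.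
- by rewrite map_inj_uniq ?index_enum_uniq.
- by move=> _ /mapP[j _ ->].
- by move=> _ /mapP[j _ ->]; rewrite c'b.
- by rewrite big_map -[RHS]sum0; apply: eq_bigr => j _; rewrite c'b.
- by rewrite map_f ?mem_index_enum.
Qed.

Lemma center_free_bigcup_chain (F : set (set D)) :
  F !=set0 -> F `<=` center_free -> total_on F subset ->
  center_free (\bigcup_(X in F) X).
Proof.
move=> F0 Ffree Ftot s uniq_s sF.
by have [X FX Xs] := chain_bigcup_finite F0 Ftot sF; apply: Ffree X FX s uniq_s Xs.
Qed.

Lemma center_free_setU1 (B : set D) d :
  center_free B -> ~ center_span B d -> center_free (B `|` [set d]).
Proof.
move=> freeB dB s uniq_s sBd c Cc sum0.
have [ds|dNs] := boolP (d \in s); last first.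
  apply: freeB uniq_s _ c Cc sum0 => y ys.
  by case: (sBd y ys) => // yd; move: dNs; rewrite -yd ys.
have s'B y : y \in rem d s -> B y.
  rewrite mem_rem_uniq // inE => /andP[yd ys].
  by case: (sBd y ys) => // /eqP; rewrite (negPf yd).
have Cs' y : y \in rem d s -> central (c y) by move/mem_rem; apply: Cc.
have sum' : c d * d + \sum_(y <- rem d s) c y * y = 0.
  by move: sum0; rewrite (perm_big _ (perm_to_rem ds)) big_cons.
have cd0 : c d = 0.
  apply: contrapT => /eqP cd_neq0; apply: dB.
  have cdU : c d \is a GRing.unit := hD cd_neq0.
  have -> : d = \sum_(y <- rem d s) (- (c d)^-1 * c y) * y.
    move/eqP: sum'; rewrite addr_eq0 => /eqP cdd.
    rewrite -{1}(mulKr cdU d) cdd mulrN -mulNr mulr_sumr.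
    by apply: eq_bigr => y _; rewrite mulrA.
  apply: center_span_seq => // y ys'.
  exact: centralM (centralN (centralV (Cc d ds))) (Cs' y ys').
move=> y ys; have [->//|yd] := eqVneq y d.
apply: (freeB _ (rem_uniq d uniq_s) s'B c Cs' _ y).
  by move: sum'; rewrite cd0 mul0r add0r.
by rewrite mem_rem_uniq // inE yd ys.
Qed.

Lemma center_basis_extension (I : set D) : center_free I ->
  exists B, center_basis B /\ I `<=` B.
Proof.
move=> freeI.
have [|F F0 FQ Ftot|M [[freeM IM] Mmax]] :=
  @Zorn_nonempty_chains D (fun B => center_free B /\ I `<=` B).
- by exists I; split.
- split; first by apply: center_free_bigcup_chain => // X /FQ[].
  by have [X FX] := F0; move=> t It; exists X => //; apply: (FQ X FX).2.
exists M; split=> //; split=> [|d]; first exact: center_free_lin_indep.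
apply: contrapT => dM.
have Md : M d.
  apply: (Mmax (M `|` [set d])); last by right.
  - by split; [exact: center_free_setU1|move=> t /IM; left].
  - by move=> t; left.
apply: dM; exists 1%N, (fun _ => d), (fun _ => 1); split=> //.
  by move=> _; exact: central_nat 1.
by rewrite big_ord1 mul1r.
Qed.

End CenterBases.

Section ElementaryOperators.
Variable D : unitRingType.
Hypothesis hD : division_ring D.

Definition elementary (f : D -> D) :=
  exists ops : seq (D * D), forall z, f z = \sum_(o <- ops) o.1 * z * o.2.

Lemma elementary_id : elementary id.
Proof. by exists [:: (1, 1)] => z; rewrite big_seq1 mul1r mulr1. Qed.

Lemma elementary_add f g :
  elementary f -> elementary g -> elementary (fun z => f z + g z).
Proof. by move=> [o1 f_o1] [o2 g_o2]; exists (o1 ++ o2) => z; rewrite big_cat f_o1 g_o2. Qed.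

Lemma elementary_mull a f : elementary f -> elementary (fun z => a * f z).
Proof.
move=> [o f_o]; exists [seq (a * p.1, p.2) | p <- o] => z.
by rewrite big_map f_o mulr_sumr; apply: eq_bigr => p _; rewrite !mulrA.
Qed.

Lemma elementary_mulr f b : elementary f -> elementary (fun z => f z * b).
Proof.
move=> [o f_o]; exists [seq (p.1, p.2 * b) | p <- o] => z.
by rewrite big_map f_o mulr_suml; apply: eq_bigr => p _; rewrite !mulrA.
Qed.

Lemma elementary_sub f g :
  elementary f -> elementary g -> elementary (fun z => f z - g z).
Proof.
move=> Ef Eg; have: elementary (fun z => f z + (-1) * g z).
  by apply: elementary_add => //; apply: elementary_mull.
by case=> o Eo; exists o => z; rewrite -Eo mulN1r.
Qed.

Lemma elementary_sum (I : Type) (r : seq I) (F : I -> D -> D) :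
  (forall i, elementary (F i)) -> elementary (fun z => \sum_(i <- r) F i z).
Proof.
move=> EF; elim: r => [|i r [o Eo]].
  by exists [::] => z; rewrite !big_nil.
have [oi Eoi] := elementary_add (EF i) (ex_intro _ o Eo).
by exists oi => z; rewrite big_cons Eoi.
Qed.

Definition center_indep (n : nat) (v : nat -> D) :=
  forall c : nat -> D, (forall j, central (c j)) ->
    \sum_(j < n) c j * v j = 0 -> forall j, (j < n)%N -> c j = 0.

Lemma center_indep_prefix n v : center_indep n.+1 v -> center_indep n v.
Proof.
move=> indep c Cc sum0 j jn.
pose c' j := if (j < n)%N then c j else 0.
have := indep c' _ _ j (ltnW jn); rewrite /c' jn; apply.
  by move=> i; case: ifP => _; [exact: Cc|exact: central0].
rewrite big_ord_recr /= ltnn mul0r addr0 -[RHS]sum0.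
by apply: eq_bigr => i _; rewrite ltn_ord.
Qed.

Section SeparateLast.
Variables (n : nat) (v : nat -> D) (phi : nat -> D -> D).
Hypotheses (indep : center_indep n.+1 v) (Ephi : forall l, elementary (phi l)).
Hypothesis phi_v : forall l j, (l < n)%N -> (j < n)%N -> phi l (v j) = (j == l)%:R.

Lemma elementary_separates_last :
  exists2 f, elementary f & (forall j, (j < n)%N -> f (v j) = 0) /\ f (v n) != 0.
Proof.
pose U z := z - \sum_(l < n) v l * phi l z.
have EU : elementary U.
  apply: elementary_sub; first exact: elementary_id.
  by apply: elementary_sum => l; apply: elementary_mull.
(* If [U] kills [v n] then [v n = \sum_l v l * s l]: a non-central [s l] gives
   a commutator operator, and central [s l] contradict independence. *)
have [Uvn0|] := eqVneq (U (v n)) 0; last first.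
  exists U => //; split => // j jn; apply/eqP; rewrite subr_eq0; apply/eqP.
  rewrite (eq_bigr (fun l : 'I_n => if nat_of_ord l == j then v l else 0)).
    by rewrite -big_mkcond big_ord1_eq jn.
  by move=> l _; rewrite phi_v // eq_sym; case: eqP; rewrite ?mulr1 ?mulr0.
pose s l := phi l (v n).
have [[l [d sd]]|s_central] := pselect (exists l : 'I_n, exists d, s l * d != d * s l).
  exists (fun z => phi l z * d - d * phi l z).
    by apply: elementary_sub; [apply: elementary_mulr|apply: elementary_mull].
  split=> [j jn|]; last by rewrite subr_eq0.
  by rewrite phi_v //; case: (j == l); rewrite ?mul1r ?mulr1 ?mul0r ?mulr0 subrr.
have Cs l : (l < n)%N -> central (s l).
  by move=> ln d; apply: contrapT => /eqP sd; apply: s_central; exists (Ordinal ln), d.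
pose c j := if (j < n)%N then s j else if j == n then -1 else 0.
have Cc j : central (c j).
  rewrite /c; case: ifP => [/Cs //|_].
  by case: ifP => _; [exact/centralN/(central_nat 1)|exact: central0].
have sum0 : \sum_(j < n.+1) c j * v j = 0.
  rewrite big_ord_recr /= /c ltnn eqxx mulN1r.
  move/eqP: Uvn0; rewrite subr_eq0 => /eqP {1}->; apply/eqP; rewrite subr_eq0; apply/eqP.
  by apply: eq_bigr => l _; rewrite ltn_ord Cs.
have := @indep c Cc sum0 n (ltnSn n); rewrite /c ltnn eqxx => /eqP.
by rewrite oppr_eq0 oner_eq0.
Qed.

End SeparateLast.

Lemma separating_elementary_ops n v : center_indep n v ->
  exists phi : nat -> D -> D, (forall l, elementary (phi l)) /\
    forall l j, (l < n)%N -> (j < n)%N -> phi l (v j) = (j == l)%:R.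
Proof.
elim: n => [|n IH] indep; first by exists (fun _ => id); split=> [l|//]; apply: elementary_id.
have [phi [Ephi phi_v]] := IH (center_indep_prefix indep).
have [f Ef [f_prefix f_vn]] := elementary_separates_last indep Ephi phi_v.
pose psi z := (f (v n))^-1 * f z.
have psi_n : psi (v n) = 1 by rewrite /psi mulVr //; apply: hD.
have psi_prefix j : (j < n)%N -> psi (v j) = 0.
  by move=> jn; rewrite /psi (f_prefix j jn) mulr0.
exists (fun l z => if (l < n)%N then phi l z - phi l (v n) * psi z else psi z); split.
  have Epsi : elementary psi by apply: elementary_mull.
  move=> l; case: (l < n)%N => //.
  by apply: elementary_sub => //; apply: elementary_mull.
move=> l j; rewrite ltnS leq_eqVlt => /predU1P[->|ln];
  rewrite ltnS leq_eqVlt => /predU1P[->|jn].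
- by rewrite ltnn psi_n eqxx.
- by rewrite ltnn psi_prefix // ltn_eqF.
- by rewrite ln psi_n mulr1 subrr gtn_eqF.
- by rewrite ln psi_prefix // mulr0 subr0 phi_v.
Qed.

End ElementaryOperators.

Lemma mulXsubC_addC_eq0 (R : nzRingType) (r : {poly R}) a b :
  r * ('X - a%:P) + b%:P = 0 -> r = 0 /\ b = 0.
Proof.
move=> /eqP; rewrite addr_eq0 => /eqP E.
have r0 : r = 0.
  apply/eqP; apply: contraT => r_neq0.
  have := size_polyC_leq1 (- b); rewrite polyCN -E size_Mmonic ?monicXsubC //.
  by rewrite size_XsubC addn2 ltnS leqn0 size_poly_eq0 (negPf r_neq0).
split=> //; move: E; rewrite r0 mul0r => /esym/eqP.
by rewrite oppr_eq0 polyC_eq0 => /eqP.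
Qed.

Section Algebraic.
Variable D : unitRingType.
Hypothesis hD : division_ring D.
Implicit Types (x : D) (p q : {poly D}).

Definition central_poly p := forall i, central p`_i.

Definition center_algebraic x :=
  exists p, [/\ p \is monic, central_poly p & root p x].

Definition centralizer x : set D := fun c => c * x = x * c.

Lemma is_subring_centralizer x : is_subring (centralizer x).
Proof.
split; first by rewrite /centralizer mul1r mulr1.
- by move=> a b xa xb; rewrite /centralizer mulrBl mulrBr xa xb.
- by move=> a b xa xb; rewrite /centralizer -mulrA xb !mulrA xa.
Qed.

Lemma central_root_monic x p : p != 0 -> central_poly p -> root p x ->
  exists q, [/\ q \is monic, central_poly q, root q x & size q = size p].
Proof.
move=> p0 Cp px; have lU : lead_coef p \is a GRing.unit.
  by apply: hD; rewrite lead_coef_eq0.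
have reg : GRing.lreg (lead_coef p)^-1 by apply/mulrI; rewrite unitrV.
exists ((lead_coef p)^-1 *: p); split.
- by rewrite monicE lead_coef_lreg // mulVr.
- by move=> i; rewrite coefZ; apply/centralM/Cp/centralV/Cp.
- by rewrite /root hornerZ (rootP px) mulr0.
- exact: lreg_size.
Qed.

Lemma ex_min_central_poly x : center_algebraic x ->
  exists p, [/\ p \is monic, central_poly p & root p x] /\
    forall q, [/\ q \is monic, central_poly q & root q x] -> (size p <= size q)%N.
Proof.
move=> [p0 Hp0].
have exP : exists n,
    `[< exists p, [/\ p \is monic, central_poly p & root p x] /\ size p = n >].
  by exists (size p0); apply/asboolP; exists p0.
case: (ex_minnP exP) => n /asboolP[p [Hp <-]] p_min.
by exists p; split => // q Hq; apply: p_min; apply/asboolP; exists q.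
Qed.

Section MinimalPolynomial.
Variables (x : D) (p : {poly D}).
Hypotheses (p_monic : p \is monic) (Cp : central_poly p) (px : root p x).
Hypothesis p_min :
  forall q, [/\ q \is monic, central_poly q & root q x] -> (size p <= size q)%N.

Lemma center_indep_powers : center_indep (size p).-1 (fun j => x ^+ j).
Proof.
move=> c Cc sum0 j jn.
pose q := \poly_(i < (size p).-1) c i.
suff q0 : q = 0 by have := congr1 (fun r : {poly D} => r`_j) q0; rewrite coef_poly jn coef0.
apply/eqP; apply: contraT => q_neq0.
have Cq : central_poly q.
  by move=> i; rewrite coef_poly; case: ifP => _; [exact: Cc|exact: central0].
have qx : root q x by rewrite /root horner_poly sum0.
have [r [r_monic Cr rx size_r]] := central_root_monic q_neq0 Cq qx.
have := p_min (And3 r_monic Cr rx); rewrite size_r => /leq_trans/(_ (size_poly _ _)).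
by rewrite leqNgt ltn_predL size_poly_gt0 monic_neq0.
Qed.

(* [dpow d s = \sum_(i < s) x ^+ i * d * x ^+ (s.-1 - i)], the derivative of
   [z ^+ s] at [x] in the direction [d]. *)
Fixpoint dpow (d : D) (s : nat) : D :=
  if s is s'.+1 then d * x ^+ s' + x * dpow d s' else 0.

Lemma dpow_commutator d s : x * dpow d s - dpow d s * x = x ^+ s * d - d * x ^+ s.
Proof.
elim: s => [|s IH] /=; first by rewrite mulr0 mul0r expr0 mul1r mulr1 !subrr.
rewrite mulrDr mulrDl opprD addrACA -[x * dpow d s * x]mulrA -mulrBr IH.
rewrite mulrBr !mulrA -exprS -[d * x ^+ s * x]mulrA -exprSr addrC addrA subrK.
by rewrite addrC.
Qed.

Definition to_centralizer d := \sum_(s < size p) p`_s * dpow d s.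

Lemma to_centralizer_comm d : centralizer x (to_centralizer d).
Proof.
apply/eqP; rewrite eq_sym -subr_eq0; apply/eqP.
rewrite /to_centralizer mulr_sumr mulr_suml -sumrB.
rewrite (eq_bigr (fun s : 'I_(size p) => p`_s * x ^+ s * d - d * (p`_s * x ^+ s)))
  => [|s _]; last first.
  by rewrite mulrA -Cp -!mulrA -mulrBr dpow_commutator mulrBr !mulrA (Cp s d).
by rewrite sumrB -mulr_suml -mulr_sumr -horner_coef (rootP px) mul0r mulr0 subrr.
Qed.

Lemma to_centralizer_decomposition :
  exists ops : seq (D * D), forall d, d = \sum_(o <- ops) to_centralizer (d * o.1) * o.2.
Proof.
set n := (size p).-1.
have p_gt1 := root_size_gt1 (monic_neq0 p_monic) px.
have size_p : size p = n.+1 by rewrite prednK // ltnW.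
have n_gt0 : (0 < n)%N by rewrite -ltnS -size_p.
have [phi [Ephi phi_v]] := separating_elementary_ops hD center_indep_powers.
have [ops Eops] := Ephi n.-1.
exists ops => d.
(* [U s = \sum_(i < s) x ^+ i * d * f (x ^+ (s.-1 - i))] for the operator [f]
   given by [ops]: it vanishes below [n] and equals [d] at [n]. *)
pose U s := \sum_(o <- ops) dpow (d * o.1) s * o.2.
have US s : U s.+1 = d * phi n.-1 (x ^+ s) + x * U s.
  rewrite /U Eops !mulr_sumr -big_split; apply: eq_bigr => o _ /=.
  by rewrite mulrDl !mulrA.
have U_low s : (s < n)%N -> U s = 0.
  elim: s => [|s IH] sn; first by rewrite /U big1 // => o _; rewrite mul0r.
  have [s_n s_pred] : (s < n)%N /\ (s < n.-1)%N by rewrite ltn_predRL (ltn_trans _ sn).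
  by rewrite US phi_v ?ltn_predL // ltn_eqF // IH // mulr0 add0r mulr0.
have U_n : U n = d.
  rewrite -(prednK n_gt0) US phi_v ?ltn_predL // eqxx mulr1.
  by rewrite U_low ?ltn_predL // mulr0 addr0.
rewrite (eq_bigr (fun o => \sum_(s < size p) p`_s * dpow (d * o.1) s * o.2))
  => [|o _]; last first.
  by rewrite /to_centralizer mulr_suml.
rewrite exchange_big /= (eq_bigr (fun s : 'I_(size p) => p`_s * U s)) => [|s _]; last first.
  by rewrite /U mulr_sumr; apply: eq_bigr => o _; rewrite mulrA.
rewrite size_p big_ord_recr /= big1 => [|s _]; last by rewrite U_low ?mulr0.
by rewrite U_n add0r [p`_n](monicP p_monic) mul1r.
Qed.

Lemma centralizer_generates : exists gs, ring_generated_over (centralizer x) gs.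
Proof.
have [ops decomp] := to_centralizer_decomposition.
exists (map snd ops) => T ST CT gsT d.
rewrite (decomp d); apply: subring_sum => // o o_ops.
case: ST => _ _ SM; apply: SM; first exact/CT/to_centralizer_comm.
by apply/gsT/map_f.
Qed.

End MinimalPolynomial.

Lemma algebraic_centralizer_generates x : center_algebraic x ->
  exists gs, ring_generated_over (centralizer x) gs.
Proof.
by case/ex_min_central_poly => p [[p_monic Cp px] p_min]; apply: centralizer_generates p_min.
Qed.

Section Transcendental.
Variable x : D.
Hypothesis x_trans : ~ center_algebraic x.

Lemma central_root_eq0 p : central_poly p -> root p x -> p = 0.
Proof.
move=> Cp px; apply/eqP; apply: contraT => p0.
by have [q [? ? ? _]] := central_root_monic p0 Cp px; case: x_trans; exists q.
Qed.

Lemma sub_central_unit a : central a -> x - a \is a GRing.unit.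
Proof.
move=> Ca; apply: hD; rewrite subr_eq0; apply/eqP => xa.
have CXa : central_poly ('X - a%:P).
  move=> i; rewrite coefB coefX coefC; apply: centralD; first exact: central_nat.
  by apply: centralN; case: eqP => _; [exact: Ca|exact: central0].
have := monic_neq0 (monicXsubC a); rewrite (central_root_eq0 CXa) ?eqxx //.
by rewrite /root hornerXsubC xa subrr.
Qed.

Lemma inv_sub_mul a b : central a -> central b ->
  (x - a)^-1 * (x - b) = 1 + (a - b) * (x - a)^-1.
Proof.
move=> Ca Cb; have -> : x - b = (x - a) + (a - b) by rewrite addrA subrK.
by rewrite mulrDr mulVr ?sub_central_unit // -(centralD Ca (centralN Cb)).
Qed.

Lemma partial_fractions_mul (s : seq D) (c : D -> D) (r : {poly D}) a0 :
  central a0 -> (forall a, a \in s -> central a) ->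
  (r.[x] + \sum_(a <- a0 :: s) c a * (x - a)^-1) * (x - a0) =
  (r * ('X - a0%:P) + (\sum_(a <- a0 :: s) c a)%:P).[x] +
    \sum_(a <- s) c a * (a - a0) * (x - a)^-1.
Proof.
move=> Ca0 Cs.
have comm_x : comm_poly ('X - a0%:P) x by rewrite /comm_poly hornerXsubC mulrBr mulrBl Ca0.
rewrite hornerD hornerM_comm // hornerXsubC hornerC !big_cons mulrDl mulrDl.
rewrite -mulrA mulVr ?sub_central_unit // mulr1 mulr_suml.
rewrite big_seq (eq_bigr (fun a => c a + c a * (a - a0) * (x - a)^-1)) => [|a sa]; last first.
  by rewrite -[LHS]mulrA (inv_sub_mul (Cs a sa) Ca0) mulrDr mulr1 mulrA.
by rewrite big_split /= -!big_seq !addrA.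
Qed.

Lemma partial_fractions_free (s : seq D) (c : D -> D) (r : {poly D}) :
  uniq s -> (forall a, a \in s -> central a) ->
  (forall a, a \in s -> central (c a)) -> central_poly r ->
  r.[x] + \sum_(a <- s) c a * (x - a)^-1 = 0 ->
  r = 0 /\ forall a, a \in s -> c a = 0.
Proof.
elim: s c r => [|a0 s IH] c r.
  by move=> _ _ _ Cr; rewrite big_nil addr0 => /eqP/(central_root_eq0 Cr).
rewrite cons_uniq => /andP[a0Ns uniq_s] Cs Cc Cr rx.
have Ca0 : central a0 := Cs a0 (mem_head a0 s).
have Cs' a : a \in s -> central a by move=> sa; apply: Cs; rewrite inE sa orbT.
have Cc' a : a \in s -> central (c a) by move=> sa; apply: Cc; rewrite inE sa orbT.
have Cr' : central_poly (r * ('X - a0%:P) + (\sum_(a <- a0 :: s) c a)%:P).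
  move=> i; rewrite coefD coefC mulrBr coefB coefMX coefMC; apply: centralD.
    by apply: centralD; [case: eqP => _; [exact: central0|exact: Cr]|exact/centralN/centralM].
  by case: eqP => _; [exact: central_sum|exact: central0].
have Cc'' a : a \in s -> central (c a * (a - a0)).
  by move=> sa; apply: centralM (Cc' a sa) (centralD (Cs' a sa) (centralN Ca0)).
have r'x : (r * ('X - a0%:P) + (\sum_(a <- a0 :: s) c a)%:P).[x] +
    \sum_(a <- s) c a * (a - a0) * (x - a)^-1 = 0.
  by rewrite -partial_fractions_mul // rx mul0r.
have [r'0 c'0] := IH _ _ uniq_s Cs' Cc'' Cr' r'x.
have c_s a : a \in s -> c a = 0.
  move=> sa; have aa0 : a - a0 \is a GRing.unit.
    by apply: hD; rewrite subr_eq0; apply: contraNneq a0Ns => <-.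
  by apply: (mulIr aa0); rewrite mul0r c'0.
have [r0 ca0] : r = 0 /\ c a0 = 0.
  apply: (@mulXsubC_addC_eq0 _ _ a0); move: r'0; rewrite big_cons big_seq big1 ?addr0 //.
by split=> // a; rewrite inE => /predU1P[->|/c_s].
Qed.



Lemma center_free_partial_fractions : center_free [set (x - a)^-1 | a in @central D].
Proof.
move=> t uniq_t tB c Cc sum0.
have pole y : y \in t -> central (x - y^-1) /\ (x - (x - y^-1))^-1 = y.
  by move=> /tB[a Ca <-]; rewrite invrK subKr.
pose s := [seq x - y^-1 | y <- t].
have uniq_s : uniq s by rewrite map_inj_uniq // => y1 y2 /addrI/oppr_inj/invr_inj.
have Cs a : a \in s -> central a by move=> /mapP[y yt ->]; case: (pole y yt).
have Cc' a : a \in s -> central (c (x - a)^-1).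
  by move=> /mapP[y yt ->]; rewrite (pole y yt).2; apply: Cc.
have C0 : central_poly (0 : {poly D}) by move=> i; rewrite coef0; exact: central0.
have sum0' : 0.[x] + \sum_(a <- s) c (x - a)^-1 * (x - a)^-1 = 0.
  rewrite horner0 add0r big_map -[RHS]sum0 big_seq [RHS]big_seq.
  by apply: eq_bigr => y yt; rewrite (pole y yt).2.
have [_ c0] := partial_fractions_free uniq_s Cs Cc' C0 sum0'.
by move=> y yt; have := c0 _ (map_f _ yt); rewrite (pole y yt).2.
Qed.

End Transcendental.

End Algebraic.

Theorem corollary2p12 (D : unitRingType) :
  division_ring D ->
  (exists x y : D, x * y != y * x) ->
  (exists S : D -> Prop, maximal_subring S) \/ dim_center_ge_card_center D.
Proof.
move=> hD [x [y xy]].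
have [x_alg|x_trans] := pselect (center_algebraic x).
  left; have [gs gen] := algebraic_centralizer_generates hD x_alg.
  apply: (exists_maximal_subring_over (is_subring_centralizer x) _ gen).
  by exists y => yx; rewrite yx eqxx in xy.
right; have [B [basisB fracB]] :=
  center_basis_extension hD (center_free_partial_fractions hD x_trans).
exists B, (fun a => (x - a)^-1); split=> // [a Ca|a b _ _ /invr_inj/addrI/oppr_inj //].
by apply: fracB; exists a.
Qed.
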